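(* For an integer $i\ge 0$ let $i_0i_1i_2\dots$ be its base-3 digits, least significant first, with $i=\sum_{j\ge0}i_j3^j$ (the sequence ends in infinitely many $0$'s). Call $i$ a 2-before-0 number if the first digit in this sequence that is different from $1$ equals $2$, and a 0-before-2 number otherwise. Define $x_i=1$ if $i$ is a 0-before-2 number and $x_i=-1$ if $i$ is a 2-before-0 number. Then the sequence $x_0,x_1,x_2,\dots$ equals $w_\alpha$ (term by term, indexing $w_\alpha$ from $0$).
   Context: $w_\alpha=\lim_{n\to\infty}\phi^n(1)$, where $\phi$ is the monoid endomorphism of $\{1,-1\}^*$ determined by $\phi(1)=1\,1\,(-1)$ and $\phi(-1)=1\,(-1)\,(-1)$. *)

From mathcomp Require Import all_boot all_order all_algebra.
From mathcomp Require Import boolp.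
Set Implicit Arguments. Unset Strict Implicit. Unset Printing Implicit Defensive.
Import GRing.Theory Num.Theory.
Local Open Scope ring_scope.

(* Letters of the alphabet {1,-1} are represented as integers 1 and -1. *)
Definition phi_letter (a : int) : seq int :=
  if a == 1 then [:: 1; 1; -1] else [:: 1; -1; -1].

Definition phi (w : seq int) : seq int := flatten (map phi_letter w).

Definition phi_iter (n : nat) : seq int := iter n phi [:: 1].

(* w_alpha = lim phi^n(1) converges to the infinite word x : nat -> int
   (prefix topology): every position k is eventually defined and fixed. *)
Definition is_w_alpha (x : nat -> int) : Prop :=
  forall k : nat, exists N : nat, forall n : nat, (N <= n)%N ->
    (k < size (phi_iter n))%N /\ nth 0 (phi_iter n) k = x k.

Definition digit3 (i j : nat) : nat := ((i %/ 3 ^ j) %% 3)%N.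

Definition two_before_zero (i : nat) : Prop :=
  exists j : nat, digit3 i j = 2%N /\ forall k : nat, (k < j)%N -> digit3 i k = 1%N.

Definition x_seq (i : nat) : int :=
  if `[< two_before_zero i >] then -1 else 1.

From mathcomp Require Import all_boot all_order all_algebra boolp.

(* Both letters satisfy phi(a) = 1 a (-1), so the letter of phi(w) at position
   3q + r is 1, w_q or -1 according as r = 0, 1 or 2.  The sequence x obeys
   the same recursion: a lowest base-3 digit 0 or 2 decides its value at once,
   while a lowest digit 1 is skipped, reducing 3q + 1 to q.  By induction,
   phi^n(1) is the prefix of length 3^n of x, and these prefixes exhaust x. *)

Section UniformMorphism.

Context {T S : Type} {f : T -> seq S} {k : nat}.
Hypothesis size_f : forall a, size (f a) = k.

Lemma size_flatten_uniform (w : seq T) : size (flatten (map f w)) = (k * size w)%N.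
Proof. by elim: w => [|a w IH] /=; rewrite ?muln0 // size_cat size_f IH mulnS. Qed.

Lemma nth_flatten_uniform (x0 : S) (a0 : T) (w : seq T) q r :
  (r < k)%N -> (q < size w)%N ->
  nth x0 (flatten (map f w)) (k * q + r) = nth x0 (f (nth a0 w q)) r.
Proof.
move=> lt_r_k; elim: w q => [|a w IH] [|q] //= lt_q_w.
  by rewrite nth_cat size_f muln0 add0n lt_r_k.
rewrite nth_cat size_f mulnS -addnA ltnNge leq_addr addKn.
exact: IH.
Qed.

End UniformMorphism.

Lemma size_phi_letter (a : int) : size (phi_letter a) = 3%N.
Proof. by rewrite /phi_letter; case: ifP. Qed.

Lemma digit3_0 q r : (r < 3)%N -> digit3 (3 * q + r) 0 = r.
Proof. by move=> lt_r3; rewrite /digit3 expn0 divn1 mulnC modnMDl modn_small. Qed.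

Lemma digit3S q r j : (r < 3)%N -> digit3 (3 * q + r) j.+1 = digit3 q j.
Proof.
move=> lt_r3; rewrite /digit3 expnS divnMA [(3 * q)%N]mulnC divnMDl //.
by rewrite (divn_small lt_r3) addn0.
Qed.

Lemma not_two_before_zero_3q q : ~ two_before_zero (3 * q + 0).
Proof.
case=> [[|j] [dj lt_digits]]; first by rewrite digit3_0 in dj.
by have := lt_digits 0%N isT; rewrite digit3_0.
Qed.

Lemma two_before_zero_3q1 q : two_before_zero (3 * q + 1) <-> two_before_zero q.
Proof.
split=> [[[|j] [dj lt_digits]] | [j [dj lt_digits]]].
- by rewrite digit3_0 in dj.
- exists j; split=> [|i lt_ij]; first by rewrite -(@digit3S q 1 j).
  by rewrite -(@digit3S q 1 i) //; apply: lt_digits.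
- exists j.+1; split=> [|[|i] lt_ij]; first by rewrite digit3S.
    by rewrite digit3_0.
  by rewrite digit3S //; apply: lt_digits.
Qed.

Lemma two_before_zero_3q2 q : two_before_zero (3 * q + 2).
Proof. by exists 0%N; rewrite digit3_0. Qed.

Lemma x_seq_3q_r q r : (r < 3)%N -> x_seq (3 * q + r) = nth 0%R [:: 1; x_seq q; -1]%R r.
Proof.
rewrite /x_seq; case: r => [|[|[|r]]] // _.
- by case: asboolP => // /not_two_before_zero_3q.
- by rewrite (propext (two_before_zero_3q1 q)).
- by case: asboolP => // /(_ (two_before_zero_3q2 q)).
Qed.

Lemma phi_letter_x_seq q : phi_letter (x_seq q) = [:: 1; x_seq q; -1]%R.
Proof. by rewrite /x_seq /phi_letter; case: asboolP. Qed.

Lemma size_phi_iter n : size (phi_iter n) = (3 ^ n)%N.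
Proof.
elim: n => // n IH.
by rewrite [phi_iter _]/= (size_flatten_uniform size_phi_letter) IH expnS.
Qed.

Lemma nth_phi_iter n k : (k < 3 ^ n)%N -> nth 0%R (phi_iter n) k = x_seq k.
Proof.
elim: n k => [|n IH] k.
  by case: k => // _; rewrite /x_seq asboolF //; exact: (not_two_before_zero_3q 0).
rewrite expnS => lt_k.
have lt_r3 : (k %% 3 < 3)%N by rewrite ltn_mod.
have lt_q : (k %/ 3 < size (phi_iter n))%N by rewrite size_phi_iter ltn_divLR // mulnC.
rewrite [phi_iter _]/= (divn_eq k 3) mulnC (nth_flatten_uniform size_phi_letter 0%R 0%R) //.
by rewrite IH -?size_phi_iter // phi_letter_x_seq -x_seq_3q_r.
Qed.

Theorem mainTheorem4 : is_w_alpha x_seq.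
Proof.
move=> k; exists k => n le_kn.
have lt_k : (k < 3 ^ n)%N.
  by apply: leq_trans (ltn_expl k (isT : 1 < 3)%N) _; rewrite leq_exp2l.
by rewrite size_phi_iter nth_phi_iter.
Qed.
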